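(* Let $P$ be a finite point set and $C$ a convex body in the plane. Any algorithm that classifies the points of $P$ in relation to $C$ (i.e. decides for each point of $P$ whether it lies in $C$), using only a separation oracle for $C$, must perform at least $\operatorname{price}(P,C)$ separation oracle queries.
   Context: Separation oracle: given a query point $q\in\mathbb{R}^2$, it either reports $q\in C$, or returns a line separating $q$ from $C$. The outer fence $F_{\mathrm{out}}$ of $P$ is a closed convex polygon with the minimum number of vertices such that $C\subseteq F_{\mathrm{out}}$ and $C\cap P=F_{\mathrm{out}}\cap P$. The inner fence $F_{\mathrm{in}}$ is a closed convex polygon with the minimum number of vertices such that $F_{\mathrm{in}}\subseteq C$ and $C\cap P=F_{\mathrm{in}}\cap P$. The separation price is $\operatorname{price}(P,C)=|V(F_{\mathrm{in}})|+|V(F_{\mathrm{out}})|$, where $|V(F)|$ is the number of vertices of a polygon $F$. *)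

From Stdlib Require Import Reals Lra List ClassicalEpsilon.
Open Scope R_scope.

Definition point := (R * R)%type.

Definition lin (a b : R) (p : point) : R := a * fst p + b * snd p.

Definition comb (t : R) (x y : point) : point :=
  (t * fst x + (1 - t) * fst y, t * snd x + (1 - t) * snd y).

Definition dist2 (x y : point) : R := (fst x - fst y) ^ 2 + (snd x - snd y) ^ 2.

Definition convex_set (S : point -> Prop) : Prop :=
  forall x y t, S x -> S y -> 0 <= t <= 1 -> S (comb t x y).

Definition closed_set (S : point -> Prop) : Prop :=
  forall x, ~ S x -> exists e, 0 < e /\ forall y, dist2 x y < e -> ~ S y.

Definition bounded_set (S : point -> Prop) : Prop :=
  exists M, forall x, S x -> Rabs (fst x) <= M /\ Rabs (snd x) <= M.

Definition nonempty_interior (S : point -> Prop) : Prop :=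
  exists x e, 0 < e /\ forall y, dist2 x y < e -> S y.

Definition convex_body (C : point -> Prop) : Prop :=
  convex_set C /\ closed_set C /\ bounded_set C /\ nonempty_interior C.

(* closed convex polygon: intersection of finitely many closed half-planes
   a x + b y <= c with (a,b) <> (0,0) (possibly unbounded, possibly empty) *)
Definition polygon (F : point -> Prop) : Prop :=
  exists hs : list (R * R * R),
    (forall h, In h hs -> let '(a, b, _) := h in a <> 0 \/ b <> 0) /\
    forall p, F p <-> (forall h, In h hs -> let '(a, b, c) := h in lin a b p <= c).

Definition vertex (F : point -> Prop) (x : point) : Prop :=
  F x /\ forall y z t, F y -> F z -> 0 < t < 1 -> x = comb t y z -> y = x /\ z = x.

Definition num_vertices (F : point -> Prop) (n : nat) : Prop :=
  exists l : list point, NoDup l /\ length l = n /\ forall x, In x l <-> vertex F x.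

Definition inner_fence (P : list point) (C F : point -> Prop) : Prop :=
  polygon F /\ (forall x, F x -> C x) /\ (forall p, In p P -> (C p <-> F p)).

Definition outer_fence (P : list point) (C F : point -> Prop) : Prop :=
  polygon F /\ (forall x, C x -> F x) /\ (forall p, In p P -> (C p <-> F p)).

Definition min_vertices (Fence : (point -> Prop) -> Prop) : nat :=
  epsilon (inhabits 0%nat)
    (fun n => (exists F, Fence F /\ num_vertices F n) /\
              forall m F, Fence F -> num_vertices F m -> (n <= m)%nat).

Definition price (P : list point) (C : point -> Prop) : nat :=
  (min_vertices (inner_fence P C) + min_vertices (outer_fence P C))%nat.

Inductive answer : Type :=
| Inside
| Separate (a b c : R).

Definition valid_answer (C : point -> Prop) (q : point) (ans : answer) : Prop :=
  match ans with
  | Inside => C q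
  | Separate a b c =>
      (a <> 0 \/ b <> 0) /\ lin a b q > c /\ (forall z, C z -> lin a b z <= c)
  end.

Definition separation_oracle (C : point -> Prop) (O : point -> answer) : Prop :=
  forall q, valid_answer C q (O q).

(* A deterministic adaptive algorithm accessing C only through the oracle:
   a (well-founded) decision tree; every run terminates. *)
Inductive algorithm : Type :=
| Output (cls : point -> bool)
| Query (q : point) (next : answer -> algorithm).

Fixpoint run (A : algorithm) (O : point -> answer) : point -> bool :=
  match A with
  | Output cls => cls
  | Query q k => run (k (O q)) O
  end.

Fixpoint num_queries (A : algorithm) (O : point -> answer) : nat :=
  match A with
  | Output _ => 0%nat
  | Query q k => S (num_queries (k (O q)) O)
  end.

Definition classifies (P : list point) (A : algorithm) : Prop :=
  forall C', convex_body C' -> forall O', separation_oracle C' O' ->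
    forall p, In p P -> (run A O' p = true <-> C' p).

From Pilot Require Import Defs.
From Stdlib Require Import Reals List.
From Stdlib Require Import Lra Lia Wf_nat Classical ClassicalEpsilon.
Import ListNotations.
Open Scope R_scope.

(** Run [A] against [O] and let [Q] be the queried points found inside [C] and [H] the
    half-planes returned as separators.  The hull of [Q] is an inner fence and the intersection
    of [H] an outer fence: if either disagreed with [C] at a point [p] of [P], there would be a
    second convex body on which every answer of [O] is still valid but which classifies [p]
    differently, namely [C] cut by a line separating [p] from the hull, or the intersection of
    [H] with a large box.  [A] cannot tell the two bodies apart, which contradicts correctness.
    The hull has at most [|Q|] vertices; the intersection has at most [|H|], since each of its
    vertices lies on two of the lines and no line carries three vertices.  Hence the price is
    at most [|Q| + |H|], the number of queries.  That the hull of a finite set is a polygon is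
    shown by Fourier-Motzkin elimination of the barycentric coordinates. *)

(** * Half-planes *)

Lemma point_eq (x y : point) : fst x = fst y -> snd x = snd y -> x = y.
Proof. destruct x, y; simpl; intros -> ->; reflexivity. Qed.

Lemma lin_comb a b t x y : lin a b (comb t x y) = t * lin a b x + (1 - t) * lin a b y.
Proof. unfold lin, comb; simpl; ring. Qed.

Lemma lin_sub_sq_le a b x y : (lin a b x - lin a b y) ^ 2 <= (a ^ 2 + b ^ 2) * dist2 x y.
Proof.
  unfold lin, dist2.
  pose proof (pow2_ge_0 (a * (snd x - snd y) - b * (fst x - fst y))). nra.
Qed.

Lemma dist2_nonneg x y : 0 <= dist2 x y.
Proof.
  unfold dist2. pose proof (pow2_ge_0 (fst x - fst y)). pose proof (pow2_ge_0 (snd x - snd y)). lra.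
Qed.

Lemma dist2_sym x y : dist2 x y = dist2 y x.
Proof. unfold dist2. ring. Qed.

Definition in_halfplanes (hs : list (R * R * R)) (x : point) : Prop :=
  forall h, In h hs -> let '(a, b, c) := h in lin a b x <= c.

Definition proper_halfplanes (hs : list (R * R * R)) : Prop :=
  forall h, In h hs -> let '(a, b, _) := h in a <> 0 \/ b <> 0.

Lemma polygon_in_halfplanes hs : proper_halfplanes hs -> polygon (in_halfplanes hs).
Proof. intros Hhs. exists hs. split; [exact Hhs | reflexivity]. Qed.

Lemma in_halfplanes_app hs1 hs2 x :
  in_halfplanes (hs1 ++ hs2) x <-> in_halfplanes hs1 x /\ in_halfplanes hs2 x.
Proof.
  unfold in_halfplanes. split.
  - intros H. split; intros h Hh; apply (H h), in_or_app; tauto.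
  - intros [H1 H2] h Hh. apply in_app_or in Hh as [Hh | Hh]; [exact (H1 h Hh) | exact (H2 h Hh)].
Qed.

Lemma not_in_halfplanes hs x :
  ~ in_halfplanes hs x -> exists a b c, In (a, b, c) hs /\ c < lin a b x.
Proof.
  intros H. apply NNPP; intros N. apply H. intros [[a b] c] Hh.
  apply Rnot_lt_le; intros Hlt. apply N; eauto.
Qed.

Lemma halfplane_convex (a b c : R) : convex_set (fun z : point => lin a b z <= c).
Proof.
  intros x y t Hx Hy Ht. rewrite lin_comb.
  assert (t * lin a b x <= t * c) by (apply Rmult_le_compat_l; lra).
  assert ((1 - t) * lin a b y <= (1 - t) * c) by (apply Rmult_le_compat_l; lra).
  lra.
Qed.

Lemma in_halfplanes_convex hs : convex_set (in_halfplanes hs).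
Proof.
  intros x y t Hx Hy Ht [[a b] c] Hh.
  apply (halfplane_convex a b c); [apply (Hx _ Hh) | apply (Hy _ Hh) | exact Ht].
Qed.

Lemma lin_lt_near a b c m : lin a b m < c ->
  exists e, 0 < e /\ forall y, dist2 m y < e -> lin a b y < c.
Proof.
  intros Hm. set (g := c - lin a b m).
  assert (Hg : 0 < g) by (unfold g; lra).
  assert (Hn : 0 <= a ^ 2 + b ^ 2) by nra.
  exists (g ^ 2 / (a ^ 2 + b ^ 2 + 1)). split; [apply Rdiv_lt_0_compat; nra |].
  intros y Hy. apply Rnot_le_lt. intros Hly.
  assert (He : (a ^ 2 + b ^ 2 + 1) * (g ^ 2 / (a ^ 2 + b ^ 2 + 1)) = g ^ 2) by (field; lra).
  pose proof (lin_sub_sq_le a b y m). rewrite dist2_sym in Hy. pose proof (dist2_nonneg y m).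
  assert (g <= lin a b y - lin a b m) by (unfold g; lra).
  assert (g ^ 2 <= (lin a b y - lin a b m) ^ 2) by nra.
  nra.
Qed.

Lemma halfplane_closed (a b c : R) : Defs.closed_set (fun z : point => lin a b z <= c).
Proof.
  intros x Hx.
  destruct (lin_lt_near (- a) (- b) (- c) x) as [e [He Hy]]; [unfold lin in *; lra |].
  exists e. split; [exact He |]. intros y Hd. specialize (Hy y Hd). unfold lin in *. lra.
Qed.

Lemma in_halfplanes_closed hs : Defs.closed_set (in_halfplanes hs).
Proof.
  intros x Hx. destruct (not_in_halfplanes _ _ Hx) as [a [b [c [Hh Hc]]]].
  destruct (halfplane_closed a b c x) as [e [He Hy]]; [lra |].
  exists e. split; [exact He |]. intros y Hd Hy'. exact (Hy y Hd (Hy' _ Hh)).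
Qed.

(** * Fourier-Motzkin elimination *)

Fixpoint dot (u v : list R) : R :=
  match u, v with
  | a :: u', b :: v' => a * b + dot u' v'
  | _, _ => 0
  end.

Fixpoint vadd (u v : list R) : list R :=
  match u, v with
  | a :: u', b :: v' => (a + b) :: vadd u' v'
  | [], v => v
  | u, [] => u
  end.

Definition vscale (k : R) (u : list R) : list R := map (Rmult k) u.

Lemma length_vscale k u : length (vscale k u) = length u.
Proof. apply length_map. Qed.

Lemma dot_nil_r u : dot u [] = 0.
Proof. destruct u; reflexivity. Qed.

Lemma dot_cons_r u t v : dot u (t :: v) = hd 0 u * t + dot (tl u) v.
Proof. destruct u; simpl; [ring | reflexivity]. Qed.

Lemma dot_vadd u v w : dot (vadd u v) w = dot u w + dot v w.
Proof.
  revert v w; induction u as [|a u IH]; intros [|b v] [|c w]; simpl; try ring.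
  rewrite IH. ring.
Qed.

Lemma dot_vscale k u w : dot (vscale k u) w = k * dot u w.
Proof.
  revert w; induction u as [|a u IH]; intros [|b w]; simpl; try ring.
  unfold vscale in IH. rewrite IH. ring.
Qed.

Lemma dot_app u u' w w' : length u = length w -> dot (u ++ u') (w ++ w') = dot u w + dot u' w'.
Proof.
  revert w; induction u as [|a u IH]; intros [|b w] Hl; simpl in *; try lia; [ring |].
  rewrite IH by lia. ring.
Qed.

Definition ineq := (list R * R)%type.

Definition holds (r : ineq) (v : list R) : Prop := dot (fst r) v <= snd r.

Definition satisfies (S : list ineq) (v : list R) : Prop := forall r, In r S -> holds r v.

Lemma satisfies_app S1 S2 v : satisfies (S1 ++ S2) v <-> satisfies S1 v /\ satisfies S2 v.
Proof.
  unfold satisfies. split.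
  - intros H. split; intros r Hr; apply H, in_or_app; tauto.
  - intros [H1 H2] r Hr. apply in_app_or in Hr as [Hr | Hr]; [exact (H1 r Hr) | exact (H2 r Hr)].
Qed.

Definition head_coef (r : ineq) : R := hd 0 (fst r).

Definition drop_head (r : ineq) : ineq := (tl (fst r), snd r).

Definition with_head (P : R -> Prop) (S : list ineq) : list ineq :=
  filter (fun r => if excluded_middle_informative (P (head_coef r)) then true else false) S.

Lemma in_with_head P S r : In r (with_head P S) <-> In r S /\ P (head_coef r).
Proof.
  unfold with_head. rewrite filter_In.
  destruct (excluded_middle_informative (P (head_coef r))); intuition discriminate.
Qed.

(** Meant for [head_coef p > 0 > head_coef n], where the head variable cancels. *)
Definition cancel_head (p n : ineq) : ineq :=
  (vadd (vscale (- head_coef n) (tl (fst p))) (vscale (head_coef p) (tl (fst n))),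
   - head_coef n * snd p + head_coef p * snd n).

Definition fm_step (S : list ineq) : list ineq :=
  map drop_head (with_head (fun a => a = 0) S) ++
  flat_map (fun p => map (cancel_head p) (with_head (fun a => a < 0) S))
    (with_head (fun a => 0 < a) S).

Fixpoint fm_iter (n : nat) (S : list ineq) : list ineq :=
  match n with O => S | S n' => fm_iter n' (fm_step S) end.

Lemma holds_cons r t v : holds r (t :: v) <-> head_coef r * t + dot (tl (fst r)) v <= snd r.
Proof. unfold holds, head_coef. rewrite dot_cons_r. reflexivity. Qed.

Definition head_bound (r : ineq) (v : list R) : R :=
  (snd r - dot (tl (fst r)) v) / head_coef r.

Lemma le_div_pos_iff a t u : 0 < a -> t <= u / a <-> a * t <= u.
Proof. intros Ha. assert (E : a * (u / a) = u) by (field; lra). split; intros H; nra. Qed.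

Lemma div_neg_le_iff a t u : a < 0 -> u / a <= t <-> a * t <= u.
Proof. intros Ha. assert (E : a * (u / a) = u) by (field; lra). split; intros H; nra. Qed.

Lemma holds_cons_pos r t v : 0 < head_coef r -> holds r (t :: v) <-> t <= head_bound r v.
Proof. intros Ha. unfold head_bound. rewrite holds_cons, le_div_pos_iff by exact Ha. lra. Qed.

Lemma holds_cons_neg r t v : head_coef r < 0 -> holds r (t :: v) <-> head_bound r v <= t.
Proof. intros Ha. unfold head_bound. rewrite holds_cons, div_neg_le_iff by exact Ha. lra. Qed.

Lemma holds_cons_zero r t v : head_coef r = 0 -> holds r (t :: v) <-> holds (drop_head r) v.
Proof. intros Ha. rewrite holds_cons, Ha. unfold holds, drop_head; simpl. lra. Qed.

Lemma holds_cancel_head p n v : 0 < head_coef p -> head_coef n < 0 ->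
  holds (cancel_head p n) v <-> head_bound n v <= head_bound p v.
Proof.
  intros Hp Hn. unfold holds, cancel_head, head_bound; simpl.
  rewrite dot_vadd, !dot_vscale.
  set (bp := (snd p - dot (tl (fst p)) v) / head_coef p).
  set (bn := (snd n - dot (tl (fst n)) v) / head_coef n).
  assert (Ep : head_coef p * bp = snd p - dot (tl (fst p)) v) by (unfold bp; field; lra).
  assert (En : head_coef n * bn = snd n - dot (tl (fst n)) v) by (unfold bn; field; lra).
  assert (Hpn : head_coef p * head_coef n < 0) by nra.
  split; intros H; nra.
Qed.

Lemma exists_between (Ls Us : list R) :
  (forall l u, In l Ls -> In u Us -> l <= u) ->
  exists t, (forall l, In l Ls -> l <= t) /\ (forall u, In u Us -> t <= u).
Proof.
  induction Ls as [|l Ls IH]; intros H.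
  - clear H. induction Us as [|u Us IHU].
    + exists 0. split; intros ? [].
    + destruct IHU as [t [_ Ht]]. exists (Rmin u t). split; [intros ? [] |].
      intros v [<- | Hv]; [apply Rmin_l |]. eapply Rle_trans; [apply Rmin_r | auto].
  - destruct IH as [t [H1 H2]]; [intros; apply H; simpl; auto |].
    exists (Rmax l t). split.
    + intros v [<- | Hv]; [apply Rmax_l |]. eapply Rle_trans; [apply H1; auto | apply Rmax_r].
    + intros u Hu. apply Rmax_lub; [apply H; simpl; auto | auto].
Qed.

Lemma fm_step_spec S v : (exists t, satisfies S (t :: v)) <-> satisfies (fm_step S) v.
Proof.
  unfold fm_step. split.
  - intros [t Ht] r Hr. apply in_app_or in Hr as [Hr | Hr].
    + apply in_map_iff in Hr as [r0 [<- Hr0]]. apply in_with_head in Hr0 as [Hr0 H0].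
      apply (holds_cons_zero r0 t); auto.
    + apply in_flat_map in Hr as [p [Hp Hr]]. apply in_map_iff in Hr as [n [<- Hn]].
      apply in_with_head in Hp as [Hp Pp]. apply in_with_head in Hn as [Hn Pn].
      apply holds_cancel_head; auto.
      apply Rle_trans with t; [apply (holds_cons_neg n) | apply (holds_cons_pos p)]; auto.
  - intros H.
    destruct (exists_between (map (fun r => head_bound r v) (with_head (fun a => a < 0) S))
                             (map (fun r => head_bound r v) (with_head (fun a => 0 < a) S)))
      as [t [Hlow Hup]].
    { intros l u Hl Hu.
      apply in_map_iff in Hl as [n [<- Hn]]. apply in_map_iff in Hu as [p [<- Hp]].
      assert (Hc : In (cancel_head p n) (map drop_head (with_head (fun a => a = 0) S) ++
                 flat_map (fun p => map (cancel_head p) (with_head (fun a => a < 0) S))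
                   (with_head (fun a => 0 < a) S))).
      { apply in_or_app. right. apply in_flat_map. exists p. split; [auto | apply in_map; auto]. }
      apply in_with_head in Hp as [_ Pp]. apply in_with_head in Hn as [_ Pn].
      apply (holds_cancel_head p n v Pp Pn), H, Hc. }
    exists t. intros r Hr.
    destruct (Rtotal_order (head_coef r) 0) as [Hn | [Hz | Hp]].
    + apply holds_cons_neg; auto. apply Hlow, in_map_iff. exists r. rewrite in_with_head. auto.
    + apply holds_cons_zero; auto. apply H, in_or_app. left. apply in_map, in_with_head; auto.
    + apply holds_cons_pos; auto. apply Hup, in_map_iff. exists r. rewrite in_with_head. auto.
Qed.

Lemma fm_iter_spec n S v :
  (exists w, length w = n /\ satisfies S (w ++ v)) <-> satisfies (fm_iter n S) v.
Proof.
  revert S; induction n as [|n IH]; intros S; simpl.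
  - split.
    + intros [[|t w] [Hl H]]; [exact H | discriminate].
    + intros H. exists []. auto.
  - rewrite <- IH. split.
    + intros [[|t w] [Hl H]]; [discriminate |].
      exists w. split; [simpl in Hl; lia |]. apply fm_step_spec. exists t. exact H.
    + intros [w [Hl H]]. apply fm_step_spec in H as [t Ht].
      exists (t :: w). split; [simpl; lia | exact Ht].
Qed.

(** * Convex hulls of finite sets *)

Definition sumR (l : list R) : R := fold_right Rplus 0 l.

Definition hull (Q : list point) (x : point) : Prop :=
  exists lam, length lam = length Q /\ Forall (Rle 0) lam /\ sumR lam = 1 /\
    fst x = dot (map fst Q) lam /\ snd x = dot (map snd Q) lam.

Fixpoint unit_vec (n i : nat) : list R :=
  match n, i with
  | O, _ => []
  | S n', O => 1 :: repeat 0 n'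
  | S n', S i' => 0 :: unit_vec n' i'
  end.

Lemma length_unit_vec n i : length (unit_vec n i) = n.
Proof.
  revert i; induction n as [|n IH]; intros [|i]; simpl; auto.
  rewrite repeat_length. reflexivity.
Qed.

Lemma dot_repeat0 n l : dot (repeat 0 n) l = 0.
Proof. revert l; induction n as [|n IH]; intros [|a l]; simpl; try rewrite IH; ring. Qed.

Lemma dot_unit_vec n i lam : (i < n)%nat -> dot (unit_vec n i) lam = nth i lam 0.
Proof.
  revert i lam; induction n as [|n IH]; intros [|i] [|a lam] Hi; simpl; try lia;
    rewrite ?dot_repeat0; try (rewrite IH by lia); ring.
Qed.

Lemma dot_repeat1 lam : dot (repeat 1 (length lam)) lam = sumR lam.
Proof. induction lam as [|a lam IH]; simpl; [reflexivity |]. rewrite IH. ring. Qed.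

Definition eq_rows (u : list R) (k : R) : list ineq := [(u, k); (vscale (-1) u, - k)].

Lemma satisfies_eq_rows u k w : satisfies (eq_rows u k) w <-> dot u w = k.
Proof.
  unfold satisfies, holds, eq_rows. split.
  - intros H. pose proof (H _ (or_introl eq_refl)) as H1.
    pose proof (H _ (or_intror (or_introl eq_refl))) as H2.
    simpl in H1, H2. rewrite dot_vscale in H2. lra.
  - intros E r [<- | [<- | []]]; simpl; rewrite ?dot_vscale; lra.
Qed.

Definition pt_vec (x : point) : list R := [fst x; snd x].

Definition nonneg_rows (n : nat) : list ineq :=
  map (fun i => (vscale (-1) (unit_vec n i) ++ [0; 0], 0)) (seq 0 n).

Lemma satisfies_nonneg_rows lam x :
  satisfies (nonneg_rows (length lam)) (lam ++ pt_vec x) <-> Forall (Rle 0) lam.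
Proof.
  rewrite Forall_nth. unfold satisfies, holds, nonneg_rows. split.
  - intros H i d Hi. rewrite nth_indep with (d' := 0) by exact Hi.
    assert (Hin : In (vscale (-1) (unit_vec (length lam) i) ++ [0; 0], 0)
                    (map (fun i => (vscale (-1) (unit_vec (length lam) i) ++ [0; 0], 0))
                       (seq 0 (length lam)))).
    { apply in_map_iff. exists i. split; [reflexivity | apply in_seq; lia]. }
    specialize (H _ Hin). simpl in H.
    rewrite dot_app, dot_vscale, dot_unit_vec in H
      by (rewrite ?length_vscale, ?length_unit_vec; lia).
    simpl in H. lra.
  - intros H r Hr. apply in_map_iff in Hr as [i [<- Hi]]. apply in_seq in Hi. simpl.
    rewrite dot_app, dot_vscale, dot_unit_vec by (rewrite ?length_vscale, ?length_unit_vec; lia).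
    specialize (H i 0 ltac:(lia)). simpl. lra.
Qed.

(** The defining constraints of [hull Q] on the unknowns [lam ++ pt_vec x]. *)
Definition hull_system (Q : list point) : list ineq :=
  let n := length Q in
  nonneg_rows n ++
  eq_rows (repeat 1 n ++ [0; 0]) 1 ++
  eq_rows (map fst Q ++ [-1; 0]) 0 ++
  eq_rows (map snd Q ++ [0; -1]) 0.

Lemma hull_system_spec Q lam x : length lam = length Q ->
  satisfies (hull_system Q) (lam ++ pt_vec x) <->
  Forall (Rle 0) lam /\ sumR lam = 1 /\
  fst x = dot (map fst Q) lam /\ snd x = dot (map snd Q) lam.
Proof.
  intros Hl. unfold hull_system. rewrite !satisfies_app, !satisfies_eq_rows.
  assert (L1 : length (repeat 1 (length Q)) = length lam) by (rewrite repeat_length; lia).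
  assert (L2 : length (map fst Q) = length lam) by (rewrite length_map, Hl; reflexivity).
  assert (L3 : length (map snd Q) = length lam) by (rewrite length_map, Hl; reflexivity).
  rewrite (dot_app _ _ _ _ L1), (dot_app _ _ _ _ L2), (dot_app _ _ _ _ L3).
  rewrite <- Hl, dot_repeat1, satisfies_nonneg_rows. unfold pt_vec; simpl.
  split; intros [H1 [H2 [H3 H4]]]; repeat split; auto; lra.
Qed.

Definition planar_halfplanes (r : ineq) : list (R * R * R) :=
  let a := nth 0 (fst r) 0 in
  let b := nth 1 (fst r) 0 in
  if excluded_middle_informative (a = 0 /\ b = 0) then
    if excluded_middle_informative (0 <= snd r) then [] else [(1, 0, -1); (-1, 0, -1)]
  else [(a, b, snd r)].

Lemma dot_pt_vec u x : dot u (pt_vec x) = lin (nth 0 u 0) (nth 1 u 0) x.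
Proof. unfold pt_vec, lin. destruct u as [|a [|b u]]; simpl; rewrite ?dot_nil_r; ring. Qed.

Lemma planar_halfplanes_proper S : proper_halfplanes (flat_map planar_halfplanes S).
Proof.
  intros h Hh. apply in_flat_map in Hh as [r [_ Hh]]. unfold planar_halfplanes in Hh.
  destruct excluded_middle_informative as [Hab | Hab];
    [destruct excluded_middle_informative |];
    simpl in Hh; repeat (destruct Hh as [<- | Hh]; [lra || tauto |]); destruct Hh.
Qed.

Lemma holds_planar r x : holds r (pt_vec x) <-> in_halfplanes (planar_halfplanes r) x.
Proof.
  unfold holds, in_halfplanes, planar_halfplanes. rewrite dot_pt_vec.
  destruct excluded_middle_informative as [[Ha Hb] | Hab].
  - rewrite Ha, Hb. unfold lin.
    destruct excluded_middle_informative as [Hk | Hk]; split.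
    + intros _ h [].
    + intros _. lra.
    + intros H. lra.
    + intros H.
      pose proof (H _ (or_introl eq_refl)). pose proof (H _ (or_intror (or_introl eq_refl))).
      simpl in *. lra.
  - split.
    + intros H h [<- | []]. exact H.
    + intros H. exact (H _ (or_introl eq_refl)).
Qed.

Lemma satisfies_planar S x :
  satisfies S (pt_vec x) <-> in_halfplanes (flat_map planar_halfplanes S) x.
Proof.
  unfold satisfies. split.
  - intros H h Hh. apply in_flat_map in Hh as [r [Hr Hh]].
    exact (proj1 (holds_planar r x) (H r Hr) h Hh).
  - intros H r Hr. apply holds_planar. intros h Hh.
    apply H, in_flat_map. eauto.
Qed.

Lemma hull_halfplanes Q :
  exists hs, proper_halfplanes hs /\ forall x, hull Q x <-> in_halfplanes hs x.
Proof.
  exists (flat_map planar_halfplanes (fm_iter (length Q) (hull_system Q))).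
  split; [apply planar_halfplanes_proper |]. intros x.
  rewrite <- satisfies_planar, <- fm_iter_spec. unfold hull. split.
  - intros [lam [Hl H]]. exists lam. split; [exact Hl |]. apply hull_system_spec; auto.
  - intros [lam [Hl H]]. exists lam. split; [exact Hl |]. apply hull_system_spec; auto.
Qed.

Lemma hull_polygon Q : polygon (hull Q).
Proof. destruct (hull_halfplanes Q) as [hs [Hp H]]. exists hs. split; auto. Qed.

Lemma sumR_nonneg l : Forall (Rle 0) l -> 0 <= sumR l.
Proof. induction 1; simpl; lra. Qed.

Lemma dot_sumR_zero u l : Forall (Rle 0) l -> sumR l = 0 -> dot u l = 0.
Proof.
  intros Hl; revert u; induction Hl as [|a l Ha Hl IH]; intros u Hs; [apply dot_nil_r |].
  simpl in Hs. pose proof (sumR_nonneg _ Hl).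
  destruct u as [|b u]; simpl; [reflexivity |]. rewrite IH by lra.
  replace a with 0 by lra. ring.
Qed.

Lemma dot_vscale_r k u w : dot u (vscale k w) = k * dot u w.
Proof.
  unfold vscale. revert w; induction u as [|a u IH]; intros [|b w]; simpl; try ring.
  rewrite IH. ring.
Qed.

Lemma sumR_vscale k l : sumR (vscale k l) = k * sumR l.
Proof. unfold sumR, vscale. induction l as [|a l IH]; simpl; [ring |]. rewrite IH. ring. Qed.

Lemma hull_nil x : ~ hull [] x.
Proof. intros [[|a lam] [Hl [_ [Hs _]]]]; [simpl in Hs; lra | discriminate]. Qed.

Lemma hull_cons_split q Q x : hull (q :: Q) x ->
  x = q \/ exists t y, 0 <= t < 1 /\ hull Q y /\ x = comb t q y.
Proof.
  intros [[|l0 lam] [Hl [Hf [Hs [Hx Hy]]]]]; [discriminate |].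
  simpl in Hl, Hs, Hx, Hy. inversion Hf as [|? ? H0 Hf']; subst.
  pose proof (sumR_nonneg _ Hf').
  destruct (Req_EM_T l0 1) as [E | E].
  - left. subst l0. apply point_eq; [rewrite Hx | rewrite Hy];
      rewrite dot_sumR_zero by (auto; lra); ring.
  - right. set (k := / (1 - l0)).
    exists l0, (k * dot (map fst Q) lam, k * dot (map snd Q) lam).
    split; [lra |]. split.
    + exists (vscale k lam). unfold vscale at 1. rewrite length_map.
      split; [lia |]. split; [| split; [| split]]; simpl.
      * apply Forall_map. eapply Forall_impl; [| exact Hf']. intros v Hv; simpl.
        apply Rmult_le_pos; [unfold k; apply Rlt_le, Rinv_0_lt_compat; lra | exact Hv].
      * rewrite sumR_vscale. replace (sumR lam) with (1 - l0) by lra. unfold k. field. lra.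
      * rewrite dot_vscale_r. reflexivity.
      * rewrite dot_vscale_r. reflexivity.
    + apply point_eq; unfold comb, k; simpl; [rewrite Hx | rewrite Hy]; field; lra.
Qed.

Lemma hull_sub (S : point -> Prop) Q : convex_set S -> (forall q, In q Q -> S q) ->
  forall x, hull Q x -> S x.
Proof.
  intros HS. induction Q as [|q Q IH]; intros HQ x Hx; [destruct (hull_nil x Hx) |].
  apply hull_cons_split in Hx as [-> | [t [y [Ht [Hy ->]]]]].
  - apply HQ. left. reflexivity.
  - apply HS; [apply HQ; left; reflexivity | | lra].
    apply IH; [intros; apply HQ; right; assumption | exact Hy].
Qed.

Lemma hull_cons q Q x : hull Q x -> hull (q :: Q) x.
Proof.
  intros [lam [Hl [Hf [Hs [Hx Hy]]]]]. exists (0 :: lam). simpl.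
  split; [lia |]. split; [constructor; [lra | exact Hf] |].
  rewrite Hx, Hy. split; [lra | split; ring].
Qed.

Lemma hull_head q Q : hull (q :: Q) q.
Proof.
  exists (1 :: repeat 0 (length Q)). simpl. rewrite repeat_length. split; [reflexivity |].
  assert (Hf : Forall (Rle 0) (repeat 0 (length Q))).
  { apply Forall_forall. intros v Hv. apply repeat_spec in Hv. lra. }
  assert (Hs : sumR (repeat 0 (length Q)) = 0).
  { clear Hf. induction (length Q) as [|n IHn]; simpl; [reflexivity |]. rewrite IHn. ring. }
  split; [constructor; [lra | exact Hf] |].
  rewrite Hs, !dot_sumR_zero by auto. split; [ring | split; ring].
Qed.

Lemma hull_in q Q : In q Q -> hull Q q.
Proof.
  induction Q as [|q' Q IH]; intros H; [destruct H |].
  destruct H as [<- | H]; [apply hull_head | apply hull_cons, IH, H].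
Qed.

Lemma comb0 x y : comb 0 x y = y.
Proof. apply point_eq; unfold comb; simpl; ring. Qed.

Lemma hull_vertex_in (F : point -> Prop) Q x :
  (forall y, hull Q y -> F y) -> hull Q x -> vertex F x -> In x Q.
Proof.
  revert x; induction Q as [|q Q IH]; intros x HF Hx Hv; [destruct (hull_nil x Hx) |].
  apply hull_cons_split in Hx as [-> | [t [y [Ht [Hy ->]]]]]; [left; reflexivity |].
  destruct (Req_EM_T t 0) as [-> | Ht0].
  - rewrite comb0 in Hv |- *. right. apply IH; auto. intros z Hz. apply HF, hull_cons, Hz.
  - destruct Hv as [_ Hv].
    destruct (Hv q y t (HF _ (hull_head q Q)) (HF _ (hull_cons _ _ _ Hy)) ltac:(lra) eq_refl)
      as [Eq _].
    left. exact Eq.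
Qed.

Lemma vertices_of_candidates (F : point -> Prop) cands :
  (forall x, vertex F x -> In x cands) ->
  exists l, NoDup l /\ (forall x, In x l <-> vertex F x) /\ incl l cands.
Proof.
  intros H.
  set (pt_dec := fun x y : point => excluded_middle_informative (x = y)).
  exists (filter (fun x => if excluded_middle_informative (vertex F x) then true else false)
            (nodup pt_dec cands)).
  split; [apply NoDup_filter, NoDup_nodup |]. split.
  - intros x. rewrite filter_In, nodup_In.
    destruct (excluded_middle_informative (vertex F x)) as [V | V]; split.
    + intros _. exact V.
    + intros _. split; [apply H, V | reflexivity].
    + intros [_ E]. discriminate.
    + intros V'. contradiction.
  - intros x Hx. apply filter_In in Hx as [Hx _]. apply nodup_In in Hx. exact Hx.
Qed.

Lemma num_vertices_hull Q : exists n, num_vertices (hull Q) n /\ (n <= length Q)%nat.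
Proof.
  destruct (vertices_of_candidates (hull Q) Q) as [l [Hn [Hl Hi]]].
  { intros x Hx. apply (hull_vertex_in (hull Q)); auto. apply Hx. }
  exists (length l). split; [exists l; auto | apply NoDup_incl_length; auto].
Qed.

(** * Vertices of polygons *)

Lemma finite_common_radius {A : Type} (l : list A) (Q : A -> R -> Prop) :
  (forall h, In h l -> exists e, 0 < e /\ forall s, Rabs s <= e -> Q h s) ->
  exists e, 0 < e /\ forall h, In h l -> forall s, Rabs s <= e -> Q h s.
Proof.
  induction l as [|h l IH]; intros H.
  - exists 1. split; [lra | intros ? []].
  - destruct (H h (or_introl eq_refl)) as [e1 [He1 H1]].
    destruct IH as [e2 [He2 H2]]; [intros; apply H; right; assumption |].
    exists (Rmin e1 e2). split; [apply Rmin_glb_lt; assumption |].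
    intros h' [<- | Hh] s Hs.
    + apply H1. eapply Rle_trans; [exact Hs | apply Rmin_l].
    + apply H2; [exact Hh |]. eapply Rle_trans; [exact Hs | apply Rmin_r].
Qed.

Definition shift (v : point) (s : R) (d : point) : point :=
  (fst v + s * fst d, snd v + s * snd d).

Lemma lin_shift a b v s d : lin a b (shift v s d) = lin a b v + s * lin a b d.
Proof. unfold lin, shift; simpl; ring. Qed.

Lemma halfplane_shift_radius a b c v d : lin a b v <= c -> (lin a b v = c -> lin a b d = 0) ->
  exists e, 0 < e /\ forall s, Rabs s <= e -> lin a b (shift v s d) <= c.
Proof.
  intros Hv Ht. destruct (Req_EM_T (lin a b v) c) as [E | E].
  - exists 1. split; [lra |]. intros s _. rewrite lin_shift, (Ht E). lra.
  - set (K := Rabs (lin a b d) + 1).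
    assert (HK : 0 < K) by (unfold K; pose proof (Rabs_pos (lin a b d)); lra).
    exists ((c - lin a b v) / K). split; [apply Rdiv_lt_0_compat; lra |].
    intros s Hs. rewrite lin_shift.
    assert (Hsd : s * lin a b d <= Rabs s * K).
    { eapply Rle_trans; [apply Rle_abs |]. rewrite Rabs_mult.
      apply Rmult_le_compat_l; [apply Rabs_pos | unfold K; lra]. }
    assert (Rabs s * K <= (c - lin a b v) / K * K) by (apply Rmult_le_compat_r; lra).
    replace ((c - lin a b v) / K * K) with (c - lin a b v) in * by (field; lra).
    lra.
Qed.

Lemma in_halfplanes_shift hs v d : in_halfplanes hs v ->
  (forall a b c, In (a, b, c) hs -> lin a b v = c -> lin a b d = 0) ->
  exists e, 0 < e /\ forall s, Rabs s <= e -> in_halfplanes hs (shift v s d).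
Proof.
  intros Hv Ht.
  destruct (finite_common_radius hs (fun h s => let '(a, b, c) := h in lin a b (shift v s d) <= c))
    as [e [He H]].
  { intros [[a b] c] Hh. apply halfplane_shift_radius; [exact (Hv _ Hh) | apply Ht, Hh]. }
  exists e. split; [exact He |]. intros s Hs h Hh. exact (H h Hh s Hs).
Qed.

(** Otherwise all tight lines share a direction, along which one can move both ways inside the
    polygon. *)
Lemma vertex_two_tight hs v : proper_halfplanes hs -> vertex (in_halfplanes hs) v ->
  exists a1 b1 c1 a2 b2 c2, In (a1, b1, c1) hs /\ In (a2, b2, c2) hs /\
    lin a1 b1 v = c1 /\ lin a2 b2 v = c2 /\ a1 * b2 - a2 * b1 <> 0.
Proof.
  intros Hhs [Hv Hext]. apply NNPP; intros N.
  assert (Hd : exists d, (fst d <> 0 \/ snd d <> 0) /\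
            forall a b c, In (a, b, c) hs -> lin a b v = c -> lin a b d = 0).
  { destruct (classic (exists a1 b1 c1, In (a1, b1, c1) hs /\ lin a1 b1 v = c1))
      as [[a1 [b1 [c1 [H1 T1]]]] | NT].
    - exists (- b1, a1). split.
      + specialize (Hhs _ H1). simpl in *. destruct Hhs; [right | left]; lra.
      + intros a b c H T. apply NNPP; intros Ne. apply N.
        exists a1, b1, c1, a, b, c. repeat split; auto.
        intros E. apply Ne. unfold lin; simpl. lra.
    - exists (1, 0). split; [simpl; lra |]. intros a b c H T. exfalso. apply NT. eauto. }
  destruct Hd as [d [Hd0 Hd]].
  destruct (in_halfplanes_shift hs v d Hv Hd) as [e [He Hs]].
  destruct (Hext (shift v e d) (shift v (- e) d) (1 / 2)) as [E _].
  - apply Hs. rewrite Rabs_pos_eq; lra.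
  - apply Hs. rewrite Rabs_Ropp, Rabs_pos_eq; lra.
  - lra.
  - apply point_eq; unfold comb, shift; simpl; field.
  - unfold shift in E. apply (f_equal fst) in E as E1. apply (f_equal snd) in E as E2.
    simpl in E1, E2. destruct Hd0 as [Hd0 | Hd0]; apply Hd0; nra.
Qed.

(** A coordinate along the lines [lin a b = c]. *)
Definition along (a b : R) (p : point) : R := - b * fst p + a * snd p.

Lemma line_point_eq a b p q : (a <> 0 \/ b <> 0) ->
  lin a b p = lin a b q -> along a b p = along a b q -> p = q.
Proof.
  intros Hab H1 H2.
  assert (Hn : a * a + b * b <> 0) by (destruct Hab; nra).
  assert (E1 : (a * a + b * b) * (fst p - fst q) = 0).
  { transitivity (a * (lin a b p - lin a b q) - b * (along a b p - along a b q));
      [unfold lin, along; ring | rewrite H1, H2; ring]. }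
  assert (E2 : (a * a + b * b) * (snd p - snd q) = 0).
  { transitivity (b * (lin a b p - lin a b q) + a * (along a b p - along a b q));
      [unfold lin, along; ring | rewrite H1, H2; ring]. }
  apply Rmult_integral in E1 as [E1 | E1]; [contradiction |].
  apply Rmult_integral in E2 as [E2 | E2]; [contradiction |].
  apply point_eq; lra.
Qed.

Lemma between_on_line a b c x y z : (a <> 0 \/ b <> 0) ->
  lin a b x = c -> lin a b y = c -> lin a b z = c ->
  along a b y < along a b x < along a b z -> exists t, 0 < t < 1 /\ x = comb t y z.
Proof.
  intros Hab Hx Hy Hz Hs.
  set (t := (along a b z - along a b x) / (along a b z - along a b y)).
  assert (Ht : t * (along a b z - along a b y) = along a b z - along a b x)
    by (unfold t; field; lra).
  exists t. split; [split; nra |].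
  apply (line_point_eq a b); [exact Hab | rewrite lin_comb; nra |].
  unfold along, comb in *; simpl. nra.
Qed.

Lemma vertex_not_between (F : point -> Prop) a b c x y z : (a <> 0 \/ b <> 0) ->
  vertex F x -> F y -> F z -> lin a b x = c -> lin a b y = c -> lin a b z = c -> y <> x ->
  ~ (along a b y < along a b x < along a b z).
Proof.
  intros Hab [_ Hext] Fy Fz Hx Hy Hz Nyx Hs.
  destruct (between_on_line a b c x y z Hab Hx Hy Hz Hs) as [t [Ht E]].
  exact (Nyx (proj1 (Hext y z t Fy Fz Ht E))).
Qed.

Lemma no_three_collinear_vertices (F : point -> Prop) a b c u v w : (a <> 0 \/ b <> 0) ->
  vertex F u -> vertex F v -> vertex F w ->
  lin a b u = c -> lin a b v = c -> lin a b w = c -> u <> v -> v <> w -> u <> w -> False.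
Proof.
  intros Hab Vu Vv Vw Hu Hv Hw Nuv Nvw Nuw.
  assert (Inj : forall p q, lin a b p = c -> lin a b q = c -> p <> q -> along a b p <> along a b q).
  { intros p q Hp Hq N E. apply N, (line_point_eq a b); congruence. }
  pose proof (Inj u v Hu Hv Nuv). pose proof (Inj v w Hv Hw Nvw). pose proof (Inj u w Hu Hw Nuw).
  pose proof (vertex_not_between F a b c) as Mid.
  pose proof (Mid u v w Hab Vu (proj1 Vv) (proj1 Vw) Hu Hv Hw ltac:(congruence)).
  pose proof (Mid u w v Hab Vu (proj1 Vw) (proj1 Vv) Hu Hw Hv ltac:(congruence)).
  pose proof (Mid v u w Hab Vv (proj1 Vu) (proj1 Vw) Hv Hu Hw ltac:(congruence)).
  pose proof (Mid v w u Hab Vv (proj1 Vw) (proj1 Vu) Hv Hw Hu ltac:(congruence)).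
  pose proof (Mid w u v Hab Vw (proj1 Vu) (proj1 Vv) Hw Hu Hv ltac:(congruence)).
  pose proof (Mid w v u Hab Vw (proj1 Vv) (proj1 Vu) Hw Hv Hu ltac:(congruence)).
  lra.
Qed.

Lemma list_sum_map_add {A : Type} (f g : A -> nat) l :
  list_sum (map (fun x => f x + g x)%nat l) = (list_sum (map f l) + list_sum (map g l))%nat.
Proof. induction l as [|x l IH]; simpl; [reflexivity |]. rewrite IH. lia. Qed.

Lemma list_sum_map_le {A : Type} (f : A -> nat) k l :
  (forall x, In x l -> (f x <= k)%nat) -> (list_sum (map f l) <= k * length l)%nat.
Proof.
  induction l as [|x l IH]; simpl; intros H; [lia |].
  pose proof (H x (or_introl eq_refl)). pose proof (IH (fun y Hy => H y (or_intror Hy))). lia.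
Qed.

Lemma list_sum_map_ge_two {A : Type} (f : A -> nat) l x y : In x l -> In y l -> x <> y ->
  (1 <= f x)%nat -> (1 <= f y)%nat -> (2 <= list_sum (map f l))%nat.
Proof.
  assert (Hone : forall z l, In z l -> (f z <= list_sum (map f l))%nat).
  { clear. intros z l; induction l as [|w l IH]; simpl; intros Hz; [destruct Hz |].
    destruct Hz as [<- | Hz]; [lia |]. specialize (IH Hz). lia. }
  induction l as [|z l IH]; intros Hx Hy N Fx Fy; [destruct Hx |]. simpl.
  destruct Hx as [<- | Hx], Hy as [<- | Hy]; [contradiction | | |].
  - pose proof (Hone y l Hy). lia.
  - pose proof (Hone x l Hx). lia.
  - specialize (IH Hx Hy N Fx Fy). lia.
Qed.

(** Double counting: the number of incidences lies between [2 * length l] and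
    [2 * length hs]. *)
Lemma length_le_of_incidences {V H : Type} (inc : H -> V -> bool) (l : list V) (hs : list H) :
  (forall v, In v l -> exists h1 h2, In h1 hs /\ In h2 hs /\ h1 <> h2 /\
                                   inc h1 v = true /\ inc h2 v = true) ->
  (forall h, In h hs -> (length (filter (inc h) l) <= 2)%nat) ->
  (length l <= length hs)%nat.
Proof.
  intros Hv Hh.
  assert (Hlow : (2 * length l <= list_sum (map (fun h => length (filter (inc h) l)) hs))%nat).
  { clear Hh. induction l as [|v l IH]; simpl; [lia |].
    transitivity (list_sum (map (fun h => (if inc h v then 1 else 0) +
                                          length (filter (inc h) l))%nat hs)).
    - rewrite list_sum_map_add.
      destruct (Hv v (or_introl eq_refl)) as [h1 [h2 [H1 [H2 [N [I1 I2]]]]]].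
      pose proof (list_sum_map_ge_two (fun h => if inc h v then 1%nat else 0%nat) hs h1 h2
                    H1 H2 N ltac:(cbv beta; rewrite I1; lia) ltac:(cbv beta; rewrite I2; lia)).
      specialize (IH (fun w Hw => Hv w (or_intror Hw))). lia.
    - apply Nat.eq_le_incl, f_equal, map_ext. intros h. destruct (inc h v); reflexivity. }
  pose proof (list_sum_map_le (fun h => length (filter (inc h) l)) 2 hs Hh). lia.
Qed.

Definition tight (h : R * R * R) (x : point) : bool :=
  let '(a, b, c) := h in if Req_EM_T (lin a b x) c then true else false.

Lemma tight_iff a b c x : tight (a, b, c) x = true <-> lin a b x = c.
Proof. unfold tight. destruct (Req_EM_T (lin a b x) c); split; congruence. Qed.

Lemma tight_vertices_le_two (F : point -> Prop) l a b c : (a <> 0 \/ b <> 0) -> NoDup l ->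
  (forall x, In x l -> vertex F x) -> (length (filter (tight (a, b, c)) l) <= 2)%nat.
Proof.
  intros Hab Hn Hv.
  assert (HL : forall x, In x (filter (tight (a, b, c)) l) -> vertex F x /\ lin a b x = c).
  { intros x Hx. apply filter_In in Hx as [Hx Ht]. split; [apply Hv, Hx | apply tight_iff, Ht]. }
  assert (HN : NoDup (filter (tight (a, b, c)) l)) by (apply NoDup_filter, Hn).
  destruct (filter (tight (a, b, c)) l) as [|u [|v [|w L]]]; simpl; try lia.
  exfalso.
  destruct (HL u ltac:(simpl; tauto)) as [Vu Hu].
  destruct (HL v ltac:(simpl; tauto)) as [Vv Hv'].
  destruct (HL w ltac:(simpl; tauto)) as [Vw Hw].
  apply NoDup_cons_iff in HN as [N1 HN]. apply NoDup_cons_iff in HN as [N2 _].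
  apply (no_three_collinear_vertices F a b c u v w); auto; intros E; subst; simpl in *; tauto.
Qed.

(** Cramer's rule. *)
Definition meet (h1 h2 : R * R * R) : point :=
  let '(a1, b1, c1) := h1 in
  let '(a2, b2, c2) := h2 in
  ((c1 * b2 - c2 * b1) / (a1 * b2 - a2 * b1), (a1 * c2 - a2 * c1) / (a1 * b2 - a2 * b1)).

Lemma meet_eq a1 b1 c1 a2 b2 c2 v : a1 * b2 - a2 * b1 <> 0 ->
  lin a1 b1 v = c1 -> lin a2 b2 v = c2 -> v = meet (a1, b1, c1) (a2, b2, c2).
Proof. intros D <- <-. apply point_eq; simpl; unfold lin; field; exact D. Qed.

Lemma num_vertices_halfplanes hs : proper_halfplanes hs ->
  exists n, num_vertices (in_halfplanes hs) n /\ (n <= length hs)%nat.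
Proof.
  intros Hhs.
  destruct (vertices_of_candidates (in_halfplanes hs)
              (map (fun hh => meet (fst hh) (snd hh)) (list_prod hs hs))) as [l [Hn [Hl _]]].
  { intros x Hx.
    destruct (vertex_two_tight hs x Hhs Hx) as [a1 [b1 [c1 [a2 [b2 [c2 [H1 [H2 [T1 [T2 D]]]]]]]]]].
    apply in_map_iff. exists ((a1, b1, c1), (a2, b2, c2)).
    split; [symmetry; apply meet_eq; assumption | apply in_prod; assumption]. }
  exists (length l). split; [exists l; auto |].
  apply (length_le_of_incidences tight).
  - intros v Hv. apply Hl in Hv.
    destruct (vertex_two_tight hs v Hhs Hv) as [a1 [b1 [c1 [a2 [b2 [c2 [H1 [H2 [T1 [T2 D]]]]]]]]]].
    exists (a1, b1, c1), (a2, b2, c2). repeat split; try assumption.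
    + intros E. injection E as -> -> ->. apply D. ring.
    + apply tight_iff, T1.
    + apply tight_iff, T2.
  - intros [[a b] c] Hh. apply (tight_vertices_le_two (in_halfplanes hs)); auto.
    + exact (Hhs _ Hh).
    + intros x Hx. apply Hl, Hx.
Qed.

(** * Oracles and adversaries *)

Fixpoint queries (A : algorithm) (O : point -> answer) : list point :=
  match A with
  | Output _ => []
  | Query q k => q :: queries (k (O q)) O
  end.

Lemma num_queries_length A O : num_queries A O = length (queries A O).
Proof. induction A as [cls | q k IH]; simpl; auto. Qed.

Lemma run_agree A O O' : (forall q, In q (queries A O) -> O' q = O q) -> run A O' = run A O.
Proof.
  induction A as [cls | q k IH]; simpl; intros H; [reflexivity |].
  rewrite (H q (or_introl eq_refl)). apply IH. intros q' Hq'. apply H. right. exact Hq'.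
Qed.

Definition separable (C : point -> Prop) : Prop := forall q, exists ans, valid_answer C q ans.

Lemma separation_oracle_extending C qs O : separable C ->
  (forall q, In q qs -> valid_answer C q (O q)) ->
  exists O', separation_oracle C O' /\ forall q, In q qs -> O' q = O q.
Proof.
  intros HC HO.
  assert (H : forall q, exists ans, valid_answer C q ans /\ (In q qs -> ans = O q)).
  { intros q. destruct (classic (In q qs)) as [Hq | Hq].
    - exists (O q). auto.
    - destruct (HC q) as [ans Hans]. exists ans. split; [exact Hans | contradiction]. }
  exists (fun q => epsilon (inhabits Inside)
                    (fun ans => valid_answer C q ans /\ (In q qs -> ans = O q))).
  split.
  - intros q. exact (proj1 (epsilon_spec _ _ (H q))).
  - intros q Hq. exact (proj2 (epsilon_spec _ _ (H q)) Hq).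
Qed.

Lemma valid_separate_sub (C C' : point -> Prop) q a b c : (forall z, C' z -> C z) ->
  valid_answer C q (Separate a b c) -> valid_answer C' q (Separate a b c).
Proof. intros Hsub [Hab [Hq Hz]]. split; [exact Hab | split; [exact Hq |]]. auto. Qed.

Lemma separable_halfplanes hs : proper_halfplanes hs -> separable (in_halfplanes hs).
Proof.
  intros Hhs q. destruct (classic (in_halfplanes hs q)) as [Hq | Hq]; [exists Inside; exact Hq |].
  destruct (not_in_halfplanes hs q Hq) as [a [b [c [Hh Hc]]]].
  exists (Separate a b c). split; [exact (Hhs _ Hh) | split; [lra |]].
  intros z Hz. exact (Hz _ Hh).
Qed.

Lemma separable_cut C a b c : (a <> 0 \/ b <> 0) -> separable C ->
  separable (fun z => C z /\ lin a b z <= c).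
Proof.
  intros Hab HC q. destruct (classic (C q)) as [Cq | Cq].
  - destruct (Rle_dec (lin a b q) c) as [Hq | Hq]; [exists Inside; split; assumption |].
    exists (Separate a b c). split; [exact Hab | split; [lra |]]. intros z [_ Hz]. exact Hz.
  - destruct (HC q) as [[| a' b' c'] Hans]; [contradiction |].
    exists (Separate a' b' c'). apply (valid_separate_sub C); [tauto | exact Hans].
Qed.

Lemma classification_indistinguishable P A C O C' p : classifies P A ->
  convex_body C -> separation_oracle C O -> convex_body C' -> separable C' ->
  (forall q, In q (queries A O) -> valid_answer C' q (O q)) -> In p P -> (C p <-> C' p).
Proof.
  intros HA HC HO HC' Hsep HV Hp.
  destruct (separation_oracle_extending C' (queries A O) O Hsep HV) as [O' [HO' Hagree]].
  rewrite <- (HA C HC O HO p Hp), <- (HA C' HC' O' HO' p Hp), (run_agree A O O' Hagree).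
  reflexivity.
Qed.

Lemma ball_toward (C : point -> Prop) c0 r x0 s : convex_set C ->
  (forall y, dist2 c0 y < r -> C y) -> C x0 -> 0 < s <= 1 ->
  forall z, dist2 (comb s c0 x0) z < s ^ 2 * r -> C z.
Proof.
  intros Hcv Hball Hx0 Hs z Hz.
  set (y := ((fst z - (1 - s) * fst x0) / s, (snd z - (1 - s) * snd x0) / s)).
  assert (Ez : z = comb s y x0) by (apply point_eq; unfold comb, y; simpl; field; lra).
  assert (Ed : dist2 (comb s c0 x0) z = s ^ 2 * dist2 c0 y)
    by (unfold dist2, comb, y; simpl; field; lra).
  rewrite Ez. apply Hcv; [| exact Hx0 | lra]. apply Hball.
  rewrite Ed in Hz. apply (Rmult_lt_reg_l (s ^ 2)); [nra | exact Hz].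
Qed.

Lemma convex_body_cut C a b c x0 : convex_body C -> C x0 -> lin a b x0 < c ->
  convex_body (fun z => C z /\ lin a b z <= c).
Proof.
  intros [Hcv [Hcl [[M HM] [c0 [r [Hr Hball]]]]]] Hx0 Hlx0. split; [| split; [| split]].
  - intros x y t [Cx Lx] [Cy Ly] Ht. split; [apply Hcv; assumption |].
    apply (halfplane_convex a b c); assumption.
  - intros x Hx. destruct (classic (C x)) as [Cx | Cx].
    + destruct (halfplane_closed a b c x) as [e [He Hy]]; [tauto |].
      exists e. split; [exact He |]. intros y Hd [_ Ly]. exact (Hy y Hd Ly).
    + destruct (Hcl x Cx) as [e [He Hy]].
      exists e. split; [exact He |]. intros y Hd [Cy _]. exact (Hy y Hd Cy).
  - exists M. intros x [Cx _]. exact (HM x Cx).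
  - set (D := Rabs (lin a b c0 - lin a b x0) + 1).
    assert (HD : 0 < D) by (unfold D; pose proof (Rabs_pos (lin a b c0 - lin a b x0)); lra).
    set (s := Rmin 1 ((c - lin a b x0) / (2 * D))).
    assert (Hs : 0 < s <= 1).
    { split; [apply Rmin_glb_lt; [lra | apply Rdiv_lt_0_compat; lra] | apply Rmin_l]. }
    assert (Hm : lin a b (comb s c0 x0) < c).
    { rewrite lin_comb.
      assert (s * (lin a b c0 - lin a b x0) <= s * D).
      { apply Rmult_le_compat_l; [lra |].
        pose proof (Rle_abs (lin a b c0 - lin a b x0)). unfold D. lra. }
      assert (s * D <= (c - lin a b x0) / (2 * D) * D)
        by (apply Rmult_le_compat_r; [lra | apply Rmin_r]).
      replace ((c - lin a b x0) / (2 * D) * D) with ((c - lin a b x0) / 2) in * by (field; lra).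
      lra. }
    destruct (lin_lt_near a b c _ Hm) as [e [He Hnear]].
    exists (comb s c0 x0), (Rmin (s ^ 2 * r) e).
    split; [apply Rmin_glb_lt; [apply Rmult_lt_0_compat; [apply pow_lt | ]; lra | exact He] |].
    intros y Hy. split.
    + apply (ball_toward C c0 r x0 s); auto. eapply Rlt_le_trans; [exact Hy | apply Rmin_l].
    + apply Rlt_le, Hnear. eapply Rlt_le_trans; [exact Hy | apply Rmin_r].
Qed.

Lemma separate_points x0 p : x0 <> p -> exists a b, (a <> 0 \/ b <> 0) /\ lin a b x0 < lin a b p.
Proof.
  intros N. exists (fst p - fst x0), (snd p - snd x0).
  assert (Hab : fst p - fst x0 <> 0 \/ snd p - snd x0 <> 0).
  { apply NNPP. intros H. apply N, point_eq; apply NNPP; intros E; apply H; [left | right]; lra. }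
  split; [exact Hab |].
  assert (E : lin (fst p - fst x0) (snd p - snd x0) p - lin (fst p - fst x0) (snd p - snd x0) x0
              = (fst p - fst x0) * (fst p - fst x0) + (snd p - snd x0) * (snd p - snd x0))
    by (unfold lin; ring).
  pose proof (Rle_0_sqr (fst p - fst x0)). pose proof (Rle_0_sqr (snd p - snd x0)).
  destruct Hab as [Hn | Hn]; apply Rsqr_pos_lt in Hn; unfold Rsqr in *; lra.
Qed.

Lemma convex_body_other_point C p : convex_body C -> exists x0, C x0 /\ x0 <> p.
Proof.
  intros [_ [_ [_ [c0 [r [Hr Hball]]]]]].
  set (d := Rmin 1 (r / 2)).
  assert (Hd : 0 < d <= 1 /\ d <= r / 2)
    by (split; [split; [apply Rmin_glb_lt; lra | apply Rmin_l] | apply Rmin_r]).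
  assert (C0 : C c0) by (apply Hball; unfold dist2; nra).
  assert (C1 : C (fst c0 + d, snd c0)) by (apply Hball; unfold dist2; simpl; nra).
  destruct (classic (c0 = p)) as [<- | N]; [| exists c0; auto].
  exists (fst c0 + d, snd c0). split; [exact C1 |].
  intros E. apply (f_equal fst) in E. simpl in E. lra.
Qed.

Lemma hull_separation C Q p : convex_body C -> (forall q, In q Q -> C q) -> ~ hull Q p ->
  exists a b c x0, (a <> 0 \/ b <> 0) /\ c < lin a b p /\ (forall q, In q Q -> lin a b q <= c) /\
    C x0 /\ lin a b x0 <= c.
Proof.
  intros HC HQ Np. destruct Q as [| q0 Q'] eqn:EQ.
  - destruct (convex_body_other_point C p HC) as [x0 [Cx0 N]].
    destruct (separate_points x0 p N) as [a [b [Hab Hlt]]].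
    exists a, b, (lin a b x0), x0. repeat split; auto; [intros ? [] | lra].
  - rewrite <- EQ in *. destruct (hull_halfplanes Q) as [hs [Hhs HQhs]].
    destruct (not_in_halfplanes hs p) as [a [b [c [Hh Hc]]]]; [rewrite <- HQhs; exact Np |].
    assert (Hall : forall q, In q Q -> lin a b q <= c).
    { intros q Hq. apply hull_in, HQhs in Hq. exact (Hq _ Hh). }
    exists a, b, c, q0. split; [exact (Hhs _ Hh) |]. split; [exact Hc |]. split; [exact Hall |].
    split; [apply HQ | apply Hall]; rewrite EQ; left; reflexivity.
Qed.

Lemma inner_adversary C Q p : convex_body C -> separable C -> (forall q, In q Q -> C q) ->
  ~ hull Q p -> exists C', convex_body C' /\ separable C' /\ (forall z, C' z -> C z) /\
    (forall q, In q Q -> C' q) /\ ~ C' p.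
Proof.
  intros HC Hsep HQ Np.
  destruct (hull_separation C Q p HC HQ Np) as [a [b [c [x0 [Hab [Hcp [HQc [Cx0 Hx0]]]]]]]].
  set (c' := (c + lin a b p) / 2).
  exists (fun z => C z /\ lin a b z <= c'). split; [| split; [| split; [| split]]].
  - apply (convex_body_cut C a b c' x0); auto. unfold c'. lra.
  - apply separable_cut; assumption.
  - intros z [Cz _]. exact Cz.
  - intros q Hq. split; [apply HQ, Hq |]. specialize (HQc q Hq). unfold c'. lra.
  - intros [_ Hp]. unfold c' in Hp. lra.
Qed.

Definition box (M : R) : list (R * R * R) := [(1, 0, M); (-1, 0, M); (0, 1, M); (0, -1, M)].

Lemma in_box M x : in_halfplanes (box M) x <-> Rabs (fst x) <= M /\ Rabs (snd x) <= M.
Proof.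
  unfold in_halfplanes, box, lin. split.
  - intros H.
    pose proof (H _ (or_introl eq_refl)). pose proof (H _ (or_intror (or_introl eq_refl))).
    pose proof (H _ (or_intror (or_intror (or_introl eq_refl)))).
    pose proof (H _ (or_intror (or_intror (or_intror (or_introl eq_refl))))).
    simpl in *. split; apply Rabs_le; lra.
  - intros [H1 H2].
    assert (Hb : forall u, Rabs u <= M -> - M <= u <= M).
    { intros u Hu. pose proof (Rle_abs u). pose proof (Rle_abs (- u)).
      rewrite Rabs_Ropp in *. lra. }
    apply Hb in H1, H2. intros h [<- | [<- | [<- | [<- | []]]]]; lra.
Qed.

Lemma outer_adversary C hs p : convex_body C -> proper_halfplanes hs ->
  (forall z, C z -> in_halfplanes hs z) -> in_halfplanes hs p ->
  exists C', convex_body C' /\ separable C' /\ (forall z, C z -> C' z) /\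
    (forall z, C' z -> in_halfplanes hs z) /\ C' p.
Proof.
  intros HC Hhs HChs Hp. pose proof HC as [_ [_ [[Mb HMb] [c0 [r [Hr Hball]]]]]].
  set (M := Rmax Mb (Rmax (Rabs (fst p)) (Rabs (snd p)))).
  assert (HM : Mb <= M /\ Rabs (fst p) <= M /\ Rabs (snd p) <= M).
  { unfold M. pose proof (Rmax_l Mb (Rmax (Rabs (fst p)) (Rabs (snd p)))).
    pose proof (Rmax_r Mb (Rmax (Rabs (fst p)) (Rabs (snd p)))).
    pose proof (Rmax_l (Rabs (fst p)) (Rabs (snd p))).
    pose proof (Rmax_r (Rabs (fst p)) (Rabs (snd p))).
    lra. }
  assert (HCbox : forall z, C z -> in_halfplanes (hs ++ box M) z).
  { intros z Hz. apply in_halfplanes_app. split; [apply HChs, Hz |].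
    apply in_box. destruct (HMb z Hz). lra. }
  exists (in_halfplanes (hs ++ box M)). split; [| split; [| split; [| split]]].
  - split; [apply in_halfplanes_convex |]. split; [apply in_halfplanes_closed |]. split.
    + exists M. intros x Hx. apply in_halfplanes_app in Hx as [_ Hx]. apply in_box, Hx.
    + exists c0, r. split; [exact Hr |]. intros y Hy. apply HCbox, Hball, Hy.
  - apply separable_halfplanes. intros h Hh.
    apply in_app_or in Hh as [Hh | Hh]; [exact (Hhs _ Hh) |].
    destruct Hh as [<- | [<- | [<- | [<- | []]]]]; simpl; lra.
  - exact HCbox.
  - intros z Hz. apply in_halfplanes_app in Hz. tauto.
  - apply in_halfplanes_app. split; [exact Hp | apply in_box; lra].
Qed.

(** * Fences from a run of the algorithm *)

Definition inside_points (O : point -> answer) (qs : list point) : list point :=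
  filter (fun q => match O q with Inside => true | Separate _ _ _ => false end) qs.

Definition separating_lines (O : point -> answer) (qs : list point) : list (R * R * R) :=
  flat_map (fun q => match O q with Inside => [] | Separate a b c => [(a, b, c)] end) qs.

Lemma in_inside_points O qs q : In q (inside_points O qs) <-> In q qs /\ O q = Inside.
Proof. unfold inside_points. rewrite filter_In. destruct (O q); intuition discriminate. Qed.

Lemma in_separating_lines O qs a b c :
  In (a, b, c) (separating_lines O qs) <-> exists q, In q qs /\ O q = Separate a b c.
Proof.
  unfold separating_lines. rewrite in_flat_map. split.
  - intros [q [Hq H]]. exists q. split; [exact Hq |].
    destruct (O q); simpl in H; [destruct H |].
    destruct H as [E | []]. injection E as -> -> ->. reflexivity.
  - intros [q [Hq E]]. exists q. rewrite E. simpl. auto.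
Qed.

Lemma length_inside_points_separating_lines O qs :
  (length (inside_points O qs) + length (separating_lines O qs))%nat = length qs.
Proof. induction qs as [|q qs IH]; simpl; [reflexivity |]. destruct (O q); simpl; lia. Qed.

Section Fences.

Variables (P : list point) (C : point -> Prop) (A : algorithm) (O : point -> answer).
Hypotheses (HC : convex_body C) (HA : classifies P A) (HO : separation_oracle C O).

Lemma inside_points_in_body qs q : In q (inside_points O qs) -> C q.
Proof.
  intros Hq. apply in_inside_points in Hq as [_ E]. specialize (HO q). rewrite E in HO. exact HO.
Qed.

Lemma separating_lines_proper qs : proper_halfplanes (separating_lines O qs).
Proof.
  intros [[a b] c] Hh. apply in_separating_lines in Hh as [q [_ E]].
  specialize (HO q). rewrite E in HO. exact (proj1 HO).
Qed.

Lemma body_in_separating_lines qs z : C z -> in_halfplanes (separating_lines O qs) z.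
Proof.
  intros Hz [[a b] c] Hh. apply in_separating_lines in Hh as [q [_ E]].
  specialize (HO q). rewrite E in HO. exact (proj2 (proj2 HO) z Hz).
Qed.

Lemma hull_inner_fence : inner_fence P C (hull (inside_points O (queries A O))).
Proof.
  set (Qin := inside_points O (queries A O)).
  assert (Hsub : forall x, hull Qin x -> C x).
  { apply hull_sub; [apply HC | apply inside_points_in_body]. }
  split; [apply hull_polygon |]. split; [exact Hsub |].
  intros p Hp. split; [| apply Hsub]. intros Cp. apply NNPP. intros Np.
  destruct (inner_adversary C Qin p HC (fun q => ex_intro _ (O q) (HO q))
              (inside_points_in_body _) Np) as [C' [HC' [Hsep [HC'C [HQ' NC']]]]].
  apply NC', (classification_indistinguishable P A C O C' p); auto.
  intros q Hq. pose proof (HO q) as Hq'. destruct (O q) as [| a b c] eqn:E.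
  - apply HQ', in_inside_points. auto.
  - apply (valid_separate_sub C); assumption.
Qed.

Lemma separating_lines_outer_fence :
  outer_fence P C (in_halfplanes (separating_lines O (queries A O))).
Proof.
  set (seps := separating_lines O (queries A O)).
  split; [apply polygon_in_halfplanes, separating_lines_proper |].
  split; [apply body_in_separating_lines |].
  intros p Hp. split; [apply body_in_separating_lines |]. intros Hsp. apply NNPP. intros Np.
  destruct (outer_adversary C seps p HC (separating_lines_proper _)
              (body_in_separating_lines _) Hsp)
    as [C' [HC' [Hsep [HCC' [HC'seps Cp']]]]].
  apply Np, (classification_indistinguishable P A C O C' p); auto.
  intros q Hq. pose proof (HO q) as Hq'. destruct (O q) as [| a b c] eqn:E.
  - apply HCC', Hq'.
  - destruct Hq' as [Hab [Hlt _]]. split; [exact Hab | split; [exact Hlt |]].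
    intros z Hz. apply (HC'seps z Hz (a, b, c)), in_separating_lines. eauto.
Qed.

End Fences.

Lemma min_vertices_le (Fence : (point -> Prop) -> Prop) F n :
  Fence F -> num_vertices F n -> (min_vertices Fence <= n)%nat.
Proof.
  intros HF Hn.
  destruct (dec_inh_nat_subset_has_unique_least_element
              (fun k => exists F, Fence F /\ num_vertices F k)) as [m [[Pm Hm] _]];
    [intros k; apply classic | eauto |].
  assert (Hex : exists k, (exists F, Fence F /\ num_vertices F k) /\
                 forall m F, Fence F -> num_vertices F m -> (k <= m)%nat).
  { exists m. split; [exact Pm |]. intros m' F' H1 H2. apply Hm. eauto. }
  exact (proj2 (epsilon_spec (inhabits 0%nat) _ Hex) n F HF Hn).
Qed.

Theorem lemma3p1 (P : list point) (C : point -> Prop) (HC : convex_body C)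
  (A : algorithm) (HA : classifies P A)
  (O : point -> answer) (HO : separation_oracle C O) :
  (price P C <= num_queries A O)%nat.
Proof.
  destruct (num_vertices_hull (inside_points O (queries A O))) as [n1 [Hn1 Hle1]].
  destruct (num_vertices_halfplanes (separating_lines O (queries A O))) as [n2 [Hn2 Hle2]];
    [exact (separating_lines_proper C O HO _) |].
  pose proof (min_vertices_le _ _ _ (hull_inner_fence P C A O HC HA HO) Hn1).
  pose proof (min_vertices_le _ _ _ (separating_lines_outer_fence P C A O HC HA HO) Hn2).
  pose proof (length_inside_points_separating_lines O (queries A O)).
  unfold price. rewrite num_queries_length. lia.
Qed.
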